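(* Let $G=(V,E)$ be a finite graph and let $Q$ be an admissible random invariant set. For $B \subset V$ and $\mathcal F_B$-measurable $f: \mathcal S_V \to \mathbb R$, $$\mathbb E_V(f \mid \mathcal F_Q)\, \mathbb 1\{Q \cap B = \emptyset\} = \mathbb E_V\big(f\, \mathbb 1\{Q \cap B = \emptyset\} \mid \mathcal F_Q\big) = \mathbb E_{Q^c}\big( f(\cdot \oplus \mathrm{id}) \big)\, \mathbb 1\{Q \cap B = \emptyset\}.$$
   Context: For $U\subset V$, $\mathcal S_U$ is the set of bijections $\pi:U\to U$ with $\pi(x)=x$ or $\{x,\pi(x)\}\in E$; $\mathbb P_U(\pi)=e^{-\alpha\sum_{x\in U}\mathbb 1\{\pi(x)\neq x\}}/Z(U)$ with normalizing constant $Z(U)$, and $\mathbb E_U$ its expectation. For $B\subset V$, $\mathcal F_B$ is the $\sigma$-algebra on $\mathcal S_V$ generated by the values $\pi(x)$ and $\pi^{-1}(x)$, $x\in B$. For $\pi\in\mathcal S_U$, $\pi\oplus\mathrm{id}\in\mathcal S_V$ extends $\pi$ by the identity outside $U$. A set-valued random variable $Q:\mathcal S_V\to\mathcal P(V)$ is an admissible random invariant set if $\pi(Q(\pi))=Q(\pi)$ for all $\pi\in\mathcal S_V$ and the event $\{Q=A\}$ is $\mathcal F_A$-measurable for all $A\subset V$. $\mathcal F_Q=\{R\subset\mathcal S_V: R\cap\{Q=A\}\in\mathcal F_A\text{ for all }A\subset V\}$. $\mathbb E_{Q^c}(\cdot)$ denotes $\mathbb E_{A^c}(\cdot)$ evaluated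 at $A=Q$. *)

From HB Require Import structures.
From mathcomp Require Import all_boot all_order all_algebra fingroup perm.
From mathcomp Require Import reals sequences exp.
Set Implicit Arguments. Unset Strict Implicit. Unset Printing Implicit Defensive.
Import Order.TTheory GRing.Theory Num.Theory.
Local Open Scope ring_scope.

Section Defs.
Variables (V : finType) (e : rel V).

Definition allowed (p : {perm V}) : bool := [forall x, (p x == x) || e x (p x)].

Definition Omega := {p : {perm V} | allowed p}.

(* S_U, embedded into S_V via pi |-> pi (+) id: the elements of S_V fixing
   every point outside U.  Under this identification pi (+) id is pi itself. *)
Definition SU (U : {set V}) : {set Omega} :=
  [set w : Omega | [forall x, (x \notin U) ==> (val w x == x)]].

Definition agree (B : {set V}) (w1 w2 : Omega) : bool :=
  [forall x in B, (val w1 x == val w2 x) && ((val w1)^-1%g x == (val w2)^-1%g x)].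

(* A \in F_B : the sigma-algebra on the finite set S_V generated by the values
   pi(x), pi^-1(x), x in B, i.e. events determined by these values. *)
Definition inF (B : {set V}) (A : {set Omega}) : bool :=
  [forall w1, forall w2, agree B w1 w2 ==> ((w1 \in A) == (w2 \in A))].

Definition admissible (Q : Omega -> {set V}) : Prop :=
  (forall w : Omega, [set (val w) x | x in Q w] = Q w) /\ (forall A, inF A [set w | Q w == A]).

Definition FQ (Q : Omega -> {set V}) (A : {set Omega}) : Prop :=
  forall B, inF B (A :&: [set w | Q w == B]).

Section Real.
Variables (R : realType) (alpha : R).

Definition weight (U : {set V}) (w : Omega) : R :=
  expR (- (alpha * (#|[set x in U | val w x != x]|)%:R)).

Definition Zc (U : {set V}) : R := \sum_(w in SU U) weight U w.

(* E_U(g) for g defined on S_V, evaluated as g(. (+) id) on S_U *)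
Definition EU (U : {set V}) (g : Omega -> R) : R :=
  \sum_(w in SU U) g w * (weight U w / Zc U).

Definition EV (g : Omega -> R) : R := EU setT g.

Definition fmeas (F : {set Omega} -> Prop) (g : Omega -> R) : Prop :=
  forall r : R, F [set w | g w == r].

Definition is_cond_exp (F : {set Omega} -> Prop) (f g : Omega -> R) : Prop :=
  fmeas F g /\
  forall A, F A -> EV (fun w => g w * (w \in A)%:R) = EV (fun w => f w * (w \in A)%:R).

End Real.
End Defs.

From HB Require Import structures.
From mathcomp Require Import all_boot all_order all_algebra fingroup perm action.
From mathcomp Require Import reals sequences exp.
Set Implicit Arguments. Unset Strict Implicit. Unset Printing Implicit Defensive.
Import Order.TTheory GRing.Theory Num.Theory.
Local Open Scope ring_scope.

(* On the event {Q = C} the configuration leaves C invariant, so it factors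
   uniquely as t s with t supported in C and s supported in the complement of
   C.  Events of F_C only see t, an F_B-measurable f with B disjoint from C only
   sees s, and the weight is multiplicative.  Summing out s turns the mass of f
   on {Q = C} intersected with an F_Q-event into the mass of that event times
   E_{C^c}(f); hence E_{Q^c}(f) 1{Q and B disjoint} is a version of
   E_V(f 1{Q and B disjoint} | F_Q).  Multiplying a conditional expectation by
   an F_Q-measurable indicator gives a version for the product, and versions
   are unique since every configuration has positive weight. *)

Section Splitting.
Variables (V : finType) (e : rel V).
Local Notation Om := (Omega e).

Lemma in_SU U (w : Om) : (w \in SU e U) = perm_on U (val w).
Proof.
rewrite inE; apply/forallP/subsetP => [wU x | wU x].
  by rewrite inE; apply: contraR => xU; move/implyP: (wU x); apply.
by apply/implyP; apply: contraR => /negbTE wx; apply: wU; rewrite inE wx.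
Qed.

Lemma SUT (w : Om) : w \in SU e setT.
Proof. by rewrite in_SU; apply/subsetP => x; rewrite inE. Qed.

Lemma allowed1 : allowed e 1%g.
Proof. by apply/forallP => x; rewrite perm1 eqxx. Qed.

Definition omega1 : Om := exist _ 1%g allowed1.

Lemma omega1_SU U : omega1 \in SU e U.
Proof. by rewrite in_SU; apply: perm_on1. Qed.

Lemma allowed_mul C (t s : Om) : perm_on C (val t) -> perm_on (~: C) (val s) ->
  allowed e (val t * val s)%g.
Proof.
move=> tC sC; apply/forallP => x; rewrite permM.
have [xC | xNC] := boolP (x \in C).
  by rewrite (out_perm sC) ?inE ?negbK ?(perm_closed _ tC) //; apply: (forallP (valP t)).
by rewrite (out_perm tC xNC); apply: (forallP (valP s)).
Qed.

(* Junk value [t] unless [t] and [s] have complementary supports. *)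
Definition omega_mul (t s : Om) : Om := insubd t (val t * val s)%g.

Lemma omega_mulE C (t s : Om) : perm_on C (val t) -> perm_on (~: C) (val s) ->
  val (omega_mul t s) = (val t * val s)%g.
Proof. by move=> tC sC; rewrite insubdK //; apply: allowed_mul tC sC. Qed.

Definition omega_restr (C : {set V}) (w : Om) : Om := insubd w (restr_perm C (val w)).

Lemma omega_restrE C w : (val w \in 'N(C | 'P))%g ->
  val (omega_restr C w) = restr_perm C (val w).
Proof.
move=> wC; rewrite insubdK //; apply/forallP => x.
have [xC | xNC] := boolP (x \in C).
  by rewrite restr_permE //; apply: (forallP (valP w)).
by rewrite (out_perm (restr_perm_on _ _) xNC) eqxx.
Qed.

Lemma omega_restr_on C w : (val w \in 'N(C | 'P))%g -> perm_on C (val (omega_restr C w)).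
Proof. by move=> wC; rewrite omega_restrE //; apply: restr_perm_on. Qed.

Lemma omega_restr_in C w x : (val w \in 'N(C | 'P))%g -> x \in C ->
  val (omega_restr C w) x = val w x.
Proof. by move=> wC xC; rewrite omega_restrE // restr_permE. Qed.

Lemma omega_mul_restr C w : (val w \in 'N(C | 'P))%g ->
  omega_mul (omega_restr C w) (omega_restr (~: C) w) = w.
Proof.
move=> wC; have wNC : (val w \in 'N(~: C | 'P))%g by rewrite astabsC.
apply: val_inj; rewrite (omega_mulE (omega_restr_on wC) (omega_restr_on wNC)).
apply/permP => x; rewrite permM.
have [xC | xNC] := boolP (x \in C); last first.
  by rewrite (out_perm (omega_restr_on wC) xNC) omega_restr_in // inE.
by rewrite (omega_restr_in wC xC) (out_perm (omega_restr_on wNC)) // inE negbK (astabsP wC).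
Qed.

Lemma omega_mul_inj C (t s t' s' : Om) :
  perm_on C (val t) -> perm_on (~: C) (val s) ->
  perm_on C (val t') -> perm_on (~: C) (val s') ->
  omega_mul t s = omega_mul t' s' -> t = t' /\ s = s'.
Proof.
move=> tC sC t'C s'C /(congr1 val).
rewrite (omega_mulE tC sC) (omega_mulE t'C s'C) => ts_eq.
have tt' : t = t'.
  apply: val_inj; apply/permP => x; have [xC | xNC] := boolP (x \in C); last first.
    by rewrite (out_perm tC xNC) (out_perm t'C xNC).
  have /permP/(_ x) := ts_eq; rewrite !permM.
  by rewrite (out_perm sC) ?(out_perm s'C) // inE negbK ?(perm_closed _ t'C) ?(perm_closed _ tC).
by split=> //; apply: val_inj; apply: (mulgI (val t)); rewrite {2}tt'.
Qed.

Lemma agreeP (B : {set V}) (w1 w2 : Om) :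
  {in B, forall x, val w1 x = val w2 x /\ (val w1)^-1%g x = (val w2)^-1%g x} ->
  agree B w1 w2.
Proof. by move=> h; apply/forall_inP => x /h [-> ->]; rewrite !eqxx. Qed.

Lemma agree_subset (B B' : {set V}) (w1 w2 : Om) :
  B \subset B' -> agree B' w1 w2 -> agree B w1 w2.
Proof. by move=> /subsetP sB /forall_inP h; apply/forall_inP => x /sB /h. Qed.

Lemma inF_agree B E (w1 w2 : Om) : inF B E -> agree B w1 w2 -> (w1 \in E) = (w2 \in E).
Proof. by move=> /forallP/(_ w1)/forallP/(_ w2)/implyP h /h /eqP. Qed.

Lemma agree_restr C w : (val w \in 'N(C | 'P))%g -> agree C w (omega_restr C w).
Proof.
move=> wC; apply: agreeP => x xC; split; first by rewrite omega_restr_in.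
apply: (@perm_inj _ (val (omega_restr C w))).
by rewrite permKV omega_restr_in ?permKV // -(astabsP wC) /= apermE permKV.
Qed.

Lemma agree_mull C (t s : Om) : perm_on C (val t) -> perm_on (~: C) (val s) ->
  agree C (omega_mul t s) t.
Proof.
move=> tC sC; apply: agreeP => x xC; rewrite (omega_mulE tC sC) invMg !permM.
have xNC : x \notin ~: C by rewrite inE negbK.
by rewrite (out_perm (perm_onV sC) xNC) (out_perm sC) // inE negbK (perm_closed _ tC).
Qed.

Lemma agree_mulr C (t s : Om) : perm_on C (val t) -> perm_on (~: C) (val s) ->
  agree (~: C) (omega_mul t s) s.
Proof.
move=> tC sC; apply: agreeP => x xNC; rewrite (omega_mulE tC sC) invMg !permM.
have sxNC : (val s)^-1%g x \notin C by rewrite -in_setC (perm_closed _ (perm_onV sC)).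
rewrite inE in xNC.
by rewrite (out_perm tC xNC) (out_perm (perm_onV tC) sxNC).
Qed.

Lemma sum_omega_split (R : nmodType) C (E : {set Om}) (F : Om -> R) :
  {in E, forall w, val w \in 'N(C | 'P)%g} -> inF C E ->
  \sum_(w in E) F w = \sum_(t in E :&: SU e C) \sum_(s in SU e (~: C)) F (omega_mul t s).
Proof.
move=> EC CE; rewrite pair_big_dep /=.
rewrite (eq_bigl (mem (setX (E :&: SU e C) (SU e (~: C))))); last by move=> p; rewrite !inE.
rewrite -(big_imset F (h := fun p => omega_mul p.1 p.2)); last first.
  move=> [t s] [t' s'] /setXP[/setIP[_ tC] sC] /setXP[/setIP[_ t'C] s'C].
  rewrite !in_SU in tC sC t'C s'C.
  by move/(omega_mul_inj tC sC t'C s'C) => [-> ->].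
apply: eq_bigl => w; apply/idP/imsetP => [wE | [[t s]]].
  have wC := EC w wE; have wNC : (val w \in 'N(~: C | 'P))%g by rewrite astabsC.
  exists (omega_restr C w, omega_restr (~: C) w); last by rewrite omega_mul_restr.
  rewrite in_setX in_setI -(inF_agree CE (agree_restr wC)) wE !in_SU.
  by rewrite omega_restr_on // omega_restr_on.
rewrite in_setX in_setI !in_SU => /andP[/andP[tE tC] sC] ->.
by rewrite (inF_agree CE (agree_mull tC sC)).
Qed.

End Splitting.

Section Events.
Variables (V : finType) (e : rel V) (B : {set V}).
Local Notation Om := (Omega e).

Lemma inF_I (X Y : {set Om}) : inF B X -> inF B Y -> inF B (X :&: Y).
Proof.
move=> BX BY; apply/forallP => w1; apply/forallP => w2; apply/implyP => w12.
by rewrite !inE (inF_agree BX w12) (inF_agree BY w12).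
Qed.

Lemma inF_C (X : {set Om}) : inF B X -> inF B (~: X).
Proof.
move=> BX; apply/forallP => w1; apply/forallP => w2; apply/implyP => w12.
by rewrite !inE (inF_agree BX w12).
Qed.

Lemma inF0 : inF B (set0 : {set Om}).
Proof. by apply/forallP => w1; apply/forallP => w2; rewrite !in_set0 implybT. Qed.

End Events.

Section Weights.
Variables (V : finType) (e : rel V) (R : realType) (alpha : R).
Local Notation Om := (Omega e).

Definition moved (w : Om) : {set V} := [set x | val w x != x].

Definition wt (w : Om) : R := expR (- (alpha * #|moved w|%:R)).

Lemma wt_gt0 w : 0 < wt w.
Proof. exact: expR_gt0. Qed.

Lemma weight_SU U w : w \in SU e U -> weight alpha U w = wt w.
Proof.
rewrite in_SU => wU; congr (expR (- (alpha * _%:R))); apply: eq_card => x.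
rewrite !inE; have [xU | xNU] //= := boolP (x \in U).
by rewrite (out_perm wU xNU) eqxx.
Qed.

Lemma card_moved_mul C (t s : Om) : perm_on C (val t) -> perm_on (~: C) (val s) ->
  #|moved (omega_mul t s)| = (#|moved t| + #|moved s|)%N.
Proof.
move=> tC sC; suff -> : moved (omega_mul t s) = moved t :|: moved s.
  suff st0 : moved t :&: moved s = set0 by rewrite cardsU st0 cards0 subn0.
  apply/setP => x; rewrite !inE; apply/andP => -[/(subsetP tC) xC /(subsetP sC)].
  by rewrite inE xC.
apply/setP => x; rewrite !inE (omega_mulE tC sC) permM.
have [xC | xNC] := boolP (x \in C).
  rewrite (out_perm sC) ?inE ?negbK ?(perm_closed _ tC) //.
  by rewrite (out_perm sC (x := x)) ?inE ?negbK // eqxx orbF.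
by rewrite (out_perm tC xNC) eqxx.
Qed.

Lemma wt_mul C (t s : Om) : perm_on C (val t) -> perm_on (~: C) (val s) ->
  wt (omega_mul t s) = wt t * wt s.
Proof. by move=> tC sC; rewrite /wt (card_moved_mul tC sC) natrD mulrDr opprD expRD. Qed.

Lemma Zc_SU U : Zc e alpha U = \sum_(w in SU e U) wt w.
Proof. by apply: eq_bigr => w /weight_SU. Qed.

Lemma Zc_gt0 U : 0 < Zc e alpha U.
Proof.
rewrite Zc_SU (bigD1 (omega1 e)) ?omega1_SU //= ltr_pwDl ?wt_gt0 //.
by apply: sumr_ge0 => w _; apply/ltW/wt_gt0.
Qed.

Lemma EUE U g : EU alpha U g = (\sum_(w in SU e U) g w * wt w) / Zc e alpha U.
Proof. by rewrite /EU mulr_suml; apply: eq_bigr => w /weight_SU ->; rewrite mulrA. Qed.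

Lemma EVE g : EV alpha g = (\sum_w g w * wt w) / Zc e alpha setT.
Proof. by rewrite /EV EUE; congr (_ / _); apply: eq_bigl => w; rewrite SUT. Qed.

Lemma eq_EV (g1 g2 : Om -> R) : g1 =1 g2 -> EV alpha g1 = EV alpha g2.
Proof. by move=> g12; apply: eq_bigr => w _; rewrite g12. Qed.

Lemma EVZ c (g : Om -> R) : EV alpha (fun w => c * g w) = c * EV alpha g.
Proof. by rewrite /EV /EU mulr_sumr; apply: eq_bigr => w _; rewrite -mulrA. Qed.

Lemma EV_indicator_gt0 (A : {set Om}) w0 : w0 \in A -> 0 < EV alpha (fun w => (w \in A)%:R).
Proof.
move=> Aw0; rewrite EVE divr_gt0 ?Zc_gt0 // (bigD1 w0) //= Aw0 mul1r ltr_pwDl ?wt_gt0 //.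
by apply: sumr_ge0 => w _; rewrite mulr_ge0 ?ler0n // ltW ?wt_gt0.
Qed.

Lemma fmeas_agree B (f : Om -> R) (w1 w2 : Om) :
  fmeas (fun A => inF B A) f -> agree B w1 w2 -> f w1 = f w2.
Proof. by move=> fB /(inF_agree (fB (f w2))); rewrite !inE eqxx => /eqP. Qed.

Lemma sum_SU_mul_wt C (t : Om) (F : Om -> R) : perm_on C (val t) ->
  \sum_(s in SU e (~: C)) F s * wt (omega_mul t s) = wt t * \sum_(s in SU e (~: C)) F s * wt s.
Proof.
move=> tC; rewrite mulr_sumr; apply: eq_bigr => s; rewrite in_SU => sC.
by rewrite (wt_mul tC sC) mulrCA.
Qed.

Lemma sum_mul_wt_EU C (E : {set Om}) B (f : Om -> R) :
  {in E, forall w, val w \in 'N(C | 'P)%g} -> inF C E ->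
  fmeas (fun A => inF B A) f -> B \subset ~: C ->
  \sum_(w in E) f w * wt w = (\sum_(w in E) wt w) * EU alpha (~: C) f.
Proof.
move=> EC CE fB BC; rewrite !(sum_omega_split _ EC CE) EUE Zc_SU.
set Z := \sum_(s in SU e (~: C)) wt s; set Ef := \sum_(s in SU e (~: C)) f s * wt s.
have mass_t t : t \in E :&: SU e C -> \sum_(s in SU e (~: C)) wt (omega_mul t s) = wt t * Z.
  rewrite in_setI in_SU => /andP[_ tC]; have := sum_SU_mul_wt (fun=> 1) tC.
  by under eq_bigr do rewrite mul1r; under [in RHS]eq_bigr do rewrite mul1r.
have meas_t t : t \in E :&: SU e C ->
    \sum_(s in SU e (~: C)) f (omega_mul t s) * wt (omega_mul t s) = wt t * Ef.
  rewrite in_setI in_SU => /andP[_ tC]; rewrite -(sum_SU_mul_wt f tC).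
  apply: eq_bigr => s; rewrite in_SU => sC.
  by rewrite (fmeas_agree fB (agree_subset BC (agree_mulr tC sC))).
have Z_neq0 : Z != 0 by rewrite /Z -Zc_SU gt_eqF ?Zc_gt0.
rewrite (eq_bigr _ mass_t) (eq_bigr _ meas_t) -!mulr_suml -mulrA.
by rewrite [Z * _]mulrC divfK.
Qed.

End Weights.

Section ConditionalExpectation.
Variables (V : finType) (e : rel V) (R : realType) (alpha : R).
Local Notation Om := (Omega e).
Variable F : {set Om} -> Prop.
Hypothesis F_I : forall X Y, F X -> F Y -> F (X :&: Y).

(* The level set of (g1, g2) through w0 has positive mass. *)
Lemma cond_exp_uniq (f g1 g2 : Om -> R) :
  is_cond_exp alpha F f g1 -> is_cond_exp alpha F f g2 -> g1 =1 g2.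
Proof.
move=> [g1F g1f] [g2F g2f] w0.
pose A := [set w | g1 w == g1 w0] :&: [set w | g2 w == g2 w0].
have FA : F A by apply: F_I; [apply: g1F | apply: g2F].
have Aw0 : w0 \in A by rewrite !inE !eqxx.
have level (g : Om -> R) : A \subset [set w | g w == g w0] ->
    EV alpha (fun w => g w * (w \in A)%:R) = g w0 * EV alpha (fun w => (w \in A)%:R).
  move=> /subsetP Ag; rewrite -EVZ; apply: eq_EV => w.
  by have [/Ag | _] := boolP (w \in A); rewrite ?mulr0 // inE => /eqP ->.
have := g1f A FA; rewrite -(g2f A FA) !level ?subsetIl ?subsetIr //.
by apply: mulIf; rewrite gt_eqF ?(EV_indicator_gt0 _ Aw0).
Qed.

Hypothesis F_C : forall X, F X -> F (~: X).
Hypothesis F_T : F setT.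

Lemma cond_exp_restrict (f g : Om -> R) (d : pred Om) :
  is_cond_exp alpha F f g -> F [set w | d w] ->
  is_cond_exp alpha F (fun w => f w * (d w)%:R) (fun w => g w * (d w)%:R).
Proof.
move=> [gF gf] Fd; split=> [r | A FA].
  have F_U X Y : F X -> F Y -> F (X :|: Y).
    by move=> FX FY; rewrite -[X :|: Y]setCK setCU; apply/F_C/F_I; apply: F_C.
  have -> : [set w | g w * (d w)%:R == r] =
      ([set w | g w == r] :&: [set w | d w]) :|: ([set w | 0 == r] :&: ~: [set w | d w]).
    by apply/setP => w; rewrite !inE; case: (d w); rewrite /= ?mulr1 ?mulr0 ?andbT ?andbF ?orbF.
  have F_const (b : bool) : F [set _ : Om | b].
    have -> : [set _ : Om | b] = if b then setT else ~: setT.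
      by apply/setP => w; case: b; rewrite !inE.
    by case: b; [apply: F_T | apply/F_C/F_T].
  by apply: F_U; apply: F_I => //; apply: F_C.
have restr h : EV alpha (fun w => h w * (d w)%:R * (w \in A)%:R) =
               EV alpha (fun w => h w * (w \in A :&: [set w | d w])%:R).
  by apply: eq_EV => w; rewrite !inE; case: (w \in A); case: (d w); rewrite /= ?mulr1 ?mulr0.
by rewrite !restr gf //; apply: F_I.
Qed.

End ConditionalExpectation.

Section InvariantSet.
Variables (V : finType) (e : rel V).
Local Notation Om := (Omega e).
Variables (Q : Om -> {set V}) (hQ : admissible Q).

Lemma Q_invariant w : (val w \in 'N(Q w | 'P))%g.
Proof.
apply/astabsP => x /=; rewrite apermE -{1}(hQ.1 w) mem_imset //.
exact: perm_inj.
Qed.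

Lemma FQ_I X Y : FQ Q X -> FQ Q Y -> FQ Q (X :&: Y).
Proof. by move=> QX QY C; rewrite -[[set w | Q w == C]]setIid setIACA; apply: inF_I. Qed.

Lemma FQ_C X : FQ Q X -> FQ Q (~: X).
Proof.
move=> QX C; have -> : ~: X :&: [set w | Q w == C] =
                       ~: (X :&: [set w | Q w == C]) :&: [set w | Q w == C].
  by apply/setP => w; rewrite !inE; case: (w \in X); case: (Q w == C).
by apply: inF_I; [apply: inF_C | apply: hQ.2].
Qed.

Lemma FQ_Qpred (P : pred {set V}) : FQ Q [set w | P (Q w)].
Proof.
move=> C; have -> : [set w | P (Q w)] :&: [set w | Q w == C] =
                    if P C then [set w | Q w == C] else set0.
  apply/setP => w; case PC: (P C); rewrite !inE;
  by case: eqP => [-> | _]; rewrite ?PC ?andbF.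
by case: (P C); [apply: hQ.2 | apply: inF0].
Qed.

Lemma FQ_T : FQ Q setT.
Proof. by move=> C; rewrite setTI; apply: hQ.2. Qed.

Section Disjoint.
Variables (R : realType) (alpha : R) (B : {set V}) (f : Om -> R).
Hypothesis fB : fmeas (fun A => inF B A) f.

Lemma sum_block_EU (A : {set Om}) C : FQ Q A -> B \subset ~: C ->
  \sum_(w in A :&: [set w | Q w == C]) f w * wt alpha w =
  (\sum_(w in A :&: [set w | Q w == C]) wt alpha w) * EU alpha (~: C) f.
Proof.
move=> QA BC; apply: sum_mul_wt_EU fB BC => [w|]; last exact: QA.
by move=> /setIP[_]; rewrite inE => /eqP <-; apply: Q_invariant.
Qed.

Lemma cond_exp_disjoint :
  is_cond_exp alpha (FQ Q) (fun w => f w * (Q w :&: B == set0)%:R)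
                            (fun w => EU alpha (~: Q w) f * (Q w :&: B == set0)%:R).
Proof.
split=> [r | A QA].
  exact: (FQ_Qpred (fun C => EU alpha (~: C) f * (C :&: B == set0)%:R == r)).
rewrite !EVE; congr (_ / _).
rewrite (partition_big Q predT) // [RHS](partition_big Q predT) //=.
apply: eq_bigr => C _; set E := A :&: [set w | Q w == C].
have on_E (h : Om -> R) :
    \sum_(w | Q w == C) h w * (w \in A)%:R * wt alpha w = \sum_(w in E) h w * wt alpha w.
  rewrite big_mkcond [RHS]big_mkcond; apply: eq_bigr => w _; rewrite !inE.
  by case: (Q w == C); case: (w \in A); rewrite /= ?mulr1 ?mulr0 ?mul0r.
have QE w : w \in E -> Q w = C by rewrite !inE => /andP[_ /eqP].
rewrite !on_E; under eq_bigr => w /QE -> do []; under [RHS]eq_bigr => w /QE -> do [].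
have [CB | _] := eqVneq (C :&: B) set0; last by rewrite !big1 // => w _; rewrite !mulr0 mul0r.
have BC : B \subset ~: C by rewrite -disjoints_subset -setI_eq0 setIC CB.
rewrite -mulr_sumr mulr1 mulrC -sum_block_EU //.
by apply: eq_bigr => w _; rewrite mulr1.
Qed.

End Disjoint.
End InvariantSet.

Unset Implicit Arguments.

Theorem proposition4p2 (V : finType) (e : rel V)
  (e_sym : symmetric e) (e_irr : irreflexive e)
  (R : realType) (alpha : R)
  (Q : Omega e -> {set V}) (hQ : admissible Q)
  (B : {set V}) (f : Omega e -> R) (hf : fmeas (fun A => inF B A) f) :
  let ind := fun w : Omega e => ((Q w :&: B == set0) : bool)%:R : R in
  let rhs := fun w : Omega e => EU alpha (~: Q w) f * ind w in
  is_cond_exp alpha (FQ Q) (fun w => f w * ind w) rhs /\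
  forall g h : Omega e -> R,
    is_cond_exp alpha (FQ Q) f g ->
    is_cond_exp alpha (FQ Q) (fun w => f w * ind w) h ->
    forall w, g w * ind w = h w /\ h w = rhs w.
Proof.
move=> ind rhs; have rhs_ce := cond_exp_disjoint hQ alpha hf.
split=> [|g h g_ce h_ce w]; first exact: rhs_ce.
have gind_ce := cond_exp_restrict (@FQ_I _ _ Q) (FQ_C hQ) (FQ_T hQ) g_ce
                  (FQ_Qpred hQ (fun C => C :&: B == set0)).
split; first exact: (cond_exp_uniq (@FQ_I _ _ Q) gind_ce h_ce).
exact: (cond_exp_uniq (@FQ_I _ _ Q) h_ce rhs_ce).
Qed.
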